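(* Consider the second-order Kuramoto model with bonding force $$\dot\theta_i=\omega_i,\qquad \dot\omega_i=\frac{1}{N}\sum_{j=1}^N\big[\kappa_0\cos(\theta_j-\theta_i)+\kappa_1\big](\omega_j-\omega_i)+\frac{\kappa_2}{N}\sum_{j=1}^N\big[|\theta_j-\theta_i|-\theta^\infty_{ij}\big]\operatorname{sgn}(\theta_j-\theta_i),\quad i\in[N].$$ Suppose the initial data and parameters satisfy $$(\Theta^0,W^0)\in\mathcal{S},\quad \mathcal{E}(0)<\frac{\kappa_2\big(\min_{i\ne j}\theta^\infty_{ij}\big)^2}{2N},\quad \kappa_0\cos\mathcal{U}+\kappa_1>0,\quad \kappa_2>0,$$ and for $\tau\in(0,\infty]$ let $\{(\theta_i,\omega_i)\}$ be a smooth solution on $[0,\tau)$. Then no collision occurs between any pair of distinct oscillators on $[0,\tau]$: $\theta_i(t)\ne\theta_j(t)$ for all $i\ne j$ and $t\in[0,\tau)$, and no pair collides in the limit $t\to\tau^-$ (i.e. it is not the case that $\theta_i(t)-\theta_j(t)\to0$ as $t\to\tau^-$ for some $i\neq j$).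
   Context: $N\ge2$, $[N]=\{1,\dots,N\}$, $\kappa_0,\kappa_1\ge0$, $\kappa_2>0$; $[\theta^\infty_{ij}]$ real $N\times N$ matrix with $\theta^\infty_{ii}=0$, $\theta^\infty_{ij}=\theta^\infty_{ji}$; $\operatorname{sgn}$ is the sign function; $(\Theta^0,W^0)=(\theta_i(0),\omega_i(0))_{i}$. Energy: $\mathcal{E}:=\frac12\sum_i|\omega_i|^2+\frac{\kappa_2}{4N}\sum_{i,j}(|\theta_j-\theta_i|-\theta^\infty_{ij})^2$. $\mathcal{U}:=\max_{i\ne j}\theta^\infty_{ij}+\sqrt{2N\mathcal{E}(0)/\kappa_2}$, and $\mathcal{S}:=\{(\Theta,W)\in\mathbb{R}^{2N}:|\theta_i-\theta_j|<\mathcal{U}<\pi\ \forall i,j\}$. *)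

From HB Require Import structures.
From mathcomp Require Import all_boot all_order all_algebra.
From mathcomp Require Import all_classical all_reals all_analysis.
Set Implicit Arguments. Unset Strict Implicit. Unset Printing Implicit Defensive.
Import Order.TTheory GRing.Theory Num.Theory.
Import numFieldNormedType.Exports.
Local Open Scope ring_scope.
Local Open Scope classical_set_scope.

Section Kuramoto.
Variables (R : realType) (N : nat).

(* sum of absolute values of all entries: a bound used only as a seed
   for the max / min over the (nonempty when N >= 2) off-diagonal set *)
Definition absbound (th : 'I_N -> 'I_N -> R) : R :=
  \sum_(i < N) \sum_(j < N) `|th i j|.

Definition max_offdiag (th : 'I_N -> 'I_N -> R) : R :=
  \big[Num.max/ - absbound th]_(ij : 'I_N * 'I_N | ij.1 != ij.2) th ij.1 ij.2.

Definition min_offdiag (th : 'I_N -> 'I_N -> R) : R :=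
  \big[Num.min/ absbound th]_(ij : 'I_N * 'I_N | ij.1 != ij.2) th ij.1 ij.2.

Definition energy (k2 : R) (thinf : 'I_N -> 'I_N -> R)
    (Th W : 'I_N -> R) : R :=
  2^-1 * \sum_(i < N) (W i) ^+ 2
  + k2 / (4 * N%:R) *
    \sum_(i < N) \sum_(j < N) (`|Th j - Th i| - thinf i j) ^+ 2.

Definition Ubound (k2 : R) (thinf : 'I_N -> 'I_N -> R) (E0 : R) : R :=
  max_offdiag thinf + Num.sqrt (2 * N%:R * E0 / k2).

Definition inS (U : R) (Th W : 'I_N -> R) : Prop :=
  (forall i j, `|Th i - Th j| < U) /\ U < pi.

Definition kuramoto_rhs (k0 k1 k2 : R) (thinf : 'I_N -> 'I_N -> R)
    (Th W : 'I_N -> R) (i : 'I_N) : R :=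
  N%:R^-1 * \sum_(j < N) (k0 * cos (Th j - Th i) + k1) * (W j - W i)
  + k2 / N%:R * \sum_(j < N)
      (`|Th j - Th i| - thinf i j) * Num.sg (Th j - Th i).

End Kuramoto.

Definition to_left_of {R : realType} (tau : \bar R) : set_system R :=
  match tau with
  | EFin r => at_left r
  | +oo%E => pinfty_nbhs R
  | -oo%E => ninfty_nbhs R
  end.

(* The energy E is nonincreasing as long as the phases stay distinct and
   within U of each other: while the signs of the differences θj - θi are
   frozen, E is smooth and dE/dt = -(1/2N) Σ a_ij (ω_j - ω_i)^2 with
   a_ij = κ0 cos (θj - θi) + κ1 > 0, because |θj - θi| <= U < π.
   Conversely, E(t) <= E(0) confines every | |θj - θi| - θ∞_ij | to
   δ = sqrt (2N E(0) / κ2), so all phase gaps lie in [min θ∞ - δ, U], and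
   min θ∞ - δ > 0 by the smallness of E(0).  A continuous induction closes
   the loop and gives E <= E(0) on [0, τ); the uniform gap min θ∞ - δ then
   excludes collisions, also in the limit t -> τ^-. *)

From HB Require Import structures.
From mathcomp Require Import all_boot all_order all_algebra.
From mathcomp Require Import all_classical all_reals all_analysis.
From mathcomp Require Import ring lra.
Set Implicit Arguments. Unset Strict Implicit. Unset Printing Implicit Defensive.
Import Order.TTheory GRing.Theory Num.Theory.
Import numFieldNormedType.Exports.
Local Open Scope ring_scope.
Local Open Scope classical_set_scope.

Section RealFacts.
Variable R : realType.

Lemma ler_sum_pair (I : finType) (F : I -> R) i j : i != j ->
  (forall k, 0 <= F k) -> F i + F j <= \sum_k F k.
Proof.
move=> ij F0; rewrite (bigD1 i) //= (bigD1 j) 1?eq_sym //= addrA lerDl.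
exact: sumr_ge0.
Qed.

Lemma sum_antisym_mulr (I : finType) (b : I -> I -> R) (w : I -> R) :
  (forall i j, b j i = - b i j) ->
  \sum_i \sum_j b i j * w i = - 2^-1 * \sum_i \sum_j b i j * (w j - w i).
Proof.
move=> bN.
have swap : \sum_i \sum_j b i j * w j = - \sum_i \sum_j b i j * w i.
  rewrite exchange_big -sumrN; apply: eq_bigr => j _.
  by rewrite -sumrN; apply: eq_bigr => i _; rewrite bN mulNr.
have -> : \sum_i \sum_j b i j * (w j - w i)
          = \sum_i \sum_j b i j * w j - \sum_i \sum_j b i j * w i.
  rewrite -sumrB; apply: eq_bigr => i _; rewrite -sumrB.
  by apply: eq_bigr => j _; rewrite mulrBr.
by rewrite swap; field.
Qed.

Lemma ler_cos_norm (d u : R) : `|d| <= u -> u <= pi -> cos u <= cos d.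
Proof.
move=> du upi; have -> : cos d = cos `|d|.
  by case: (ler0P d) => d0; rewrite ?cosN.
have u0 : 0 <= u := le_trans (normr_ge0 d) du.
move: du; rewrite le_eqVlt => /predU1P[-> //|du].
by rewrite ltW // ltr_cos // in_itv /= ?normr_ge0 ?u0 ?upi ?(le_trans (ltW du)).
Qed.

Lemma is_derive_sqr (f : R -> R) (x df : R) : is_derive x 1 f df ->
  is_derive x 1 (fun t => f t ^+ 2) (2 * f x * df).
Proof.
move=> Df; have := is_deriveM Df Df.
have -> : (f * f)%R = (fun t => f t ^+ 2) by apply/funext => t; rewrite expr2.
by move=> Df2; apply: is_derive_eq Df2 _; rewrite /GRing.scale /=; ring.
Qed.

Lemma is_derive_cvg (f : R -> R) (x df : R) :
  is_derive x 1 f df -> f y @[y --> x] --> f x.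
Proof.
move=> Df; apply/differentiable_continuous/derivable1_diffP.
exact: (@ex_derive _ _ _ _ _ _ _ Df).
Qed.

Lemma cvg_sgr_near {T} (F : set_system T) {FF : Filter F} (f : T -> R) (l : R) :
  l != 0 -> f t @[t --> F] --> l -> \forall t \near F, Num.sg (f t) = Num.sg l.
Proof.
case: (ltgtP l 0) => // l0 _ fl.
- by apply: filterS (cvgr_lt l fl 0 l0) => t ft0; rewrite !ltr0_sg.
- by apply: filterS (cvgr_gt l fl 0 l0) => t ft0; rewrite !gtr0_sg.
Qed.

Lemma nbhs_right_itv (s : R) (P : R -> Prop) :
  (\forall y \near s^'+, P y) -> exists2 b, s < b & forall y, s < y <= b -> P y.
Proof.
move=> /nbhs_ballP [e /= e0 He]; exists (s + e / 2).
  by rewrite ltrDl divr_gt0.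
move=> y /andP[sy yb]; apply: He => //.
rewrite /ball /= distrC ger0_norm ?subr_ge0 ?ltW // ltrBlDl.
by apply: le_lt_trans yb _; rewrite ltrD2l ltr_pdivrMr // ltr_pMr // ltr1n.
Qed.

Lemma nbhs_right_lte (s : R) (tau : \bar R) : (s%:E < tau)%E ->
  \forall y \near s^'+, (y%:E < tau)%E.
Proof.
case: tau => [r||] //=; last by move=> _; apply: nearW => y; exact: ltry.
by rewrite lte_fin => sr; apply: filterS (nbhs_right_lt sr) => y; rewrite lte_fin.
Qed.

Lemma continuous_induction (f : R -> R) (a t c : R) :
  a <= t -> f a <= c ->
  (forall s, a < s <= t -> f x @[x --> s^'-] --> f s) ->
  (forall s, a <= s < t -> f s <= c ->
     exists2 b, s < b & forall x, s <= x <= b -> f x <= c) ->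
  f t <= c.
Proof.
move=> a_t fa fcont fstep.
pose A := [set x | a <= x <= t /\ forall y, a <= y <= x -> f y <= c].
have Aa : A a.
  split; first by rewrite lexx a_t.
  by move=> y /andP[ay ya]; rewrite (@le_anti _ _ y a) ?ay ?ya.
have supA : has_sup A by split; [exists a | exists t => x [/andP[]]].
set s := sup A.
have a_s : a <= s by exact: sup_upper_bound.
have st : s <= t by apply: ge_sup; [exists a | move=> x [/andP[]]].
have below y : a <= y < s -> f y <= c.
  move=> /andP[ay ys]; rewrite -subr_gt0 in ys.
  have [x [_ Hx] yx] := sup_adherent ys supA.
  by apply: Hx; rewrite ay ltW //; move: yx; rewrite opprB addrCA subrr addr0.
have fs : f s <= c.
  move: a_s; rewrite le_eqVlt => /predU1P[<- //|a_s].
  rewrite leNgt; apply/negP => cfs.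
  have fl : f x @[x --> s^'-] --> f s by apply: fcont; rewrite a_s st.
  have near_s : \forall y \near s^'-, [/\ c < f y, a < y & y < s].
    near=> y; split; near: y;
      [exact: (cvgr_gt (f s) fl c cfs) | exact: nbhs_left_gt | exact: nbhs_left_lt].
  have [y [cfy ay ys]] := @filter_ex _ (s^'-) _ _ near_s.
  by move: cfy; rewrite ltNge below // (ltW ay) ys.
have [st'|ts] := ltP s t; last by have -> : t = s by apply/le_anti; rewrite ts st.
have [|b sb Hb] := fstep s _ fs; first by rewrite a_s st'.
have Ab : A (Num.min b t).
  split; first by rewrite ge_min lexx orbT le_min (le_trans a_s (ltW sb)) a_t.
  move=> y /andP[ay]; rewrite le_min => /andP[yb _].
  by have [ys|sy] := ltP y s; [apply: below; rewrite ay | apply: Hb; rewrite sy].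
by have := sup_upper_bound supA Ab; rewrite -/s leNgt lt_min sb st'.
Unshelve. all: by end_near.
Qed.

Lemma not_cvg_to_left_of (f : R -> R) (tau : \bar R) (l e : R) :
  (0 < tau)%E -> 0 < e ->
  (forall t, 0 <= t -> (t%:E < tau)%E -> e <= `|l - f t|) ->
  ~ f @ to_left_of tau --> l.
Proof.
case: tau => [r||] //= tau0 e0 away fl; have near_l := cvgr_dist_lt _ _ fl _ e0.
- have r0 : 0 < r by rewrite -lte_fin.
  have near_r : \forall t \near r^'-, [/\ `|l - f t| < e, 0 < t & t < r].
    by near=> t; split; near: t; [exact: near_l | exact: nbhs_left_gt | exact: nbhs_left_lt].
  have [t [ft t0 tr]] := @filter_ex _ (r^'-) _ _ near_r.
  by move: ft; rewrite ltNge away // ?ltW // lte_fin.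
- have near_oo : \forall t \near +oo, `|l - f t| < e /\ 0 < t.
    by near=> t; split; near: t; [exact: near_l | exact: nbhs_pinfty_gt].
  have [t [ft t0]] := @filter_ex _ (pinfty_nbhs R) _ _ near_oo.
  by move: ft; rewrite ltNge away // ?ltW // ltry.
Unshelve. all: by end_near.
Qed.

End RealFacts.

Section Configuration.
Variables (R : realType) (N : nat) (k0 k1 k2 : R) (thinf : 'I_N -> 'I_N -> R).
Hypotheses (k2_gt0 : 0 < k2) (thinf_sym : forall i j, thinf i j = thinf j i).

Definition coupling (Th : 'I_N -> R) (i j : 'I_N) : R := k0 * cos (Th j - Th i) + k1.

Definition energy_with (V : 'I_N -> 'I_N -> R -> R) (Th W : 'I_N -> R) : R :=
  2^-1 * \sum_(i < N) W i ^+ 2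
  + k2 / (4 * N%:R) *
    \sum_(i < N) \sum_(j < N) (V i j (Th j - Th i) - thinf i j) ^+ 2.

(* [energy] is not differentiable where some [Th j - Th i] changes sign;
   freezing the signs gives a smooth function that agrees with it as long as
   the ordering of the phases does not change. *)
Definition senergy (sig : 'I_N -> 'I_N -> R) : ('I_N -> R) -> ('I_N -> R) -> R :=
  energy_with (fun i j x => sig i j * x).

Definition radius (E : R) : R := Num.sqrt (2 * N%:R * E / k2).

Lemma energy_senergy Th W sig : (forall i j, Num.sg (Th j - Th i) = sig i j) ->
  energy k2 thinf Th W = senergy sig Th W.
Proof.
move=> sgE; rewrite /energy /senergy /energy_with; congr (_ + _ * _).
by apply: eq_bigr => i _; apply: eq_bigr => j _; rewrite normrEsg sgE.
Qed.

Lemma cvg_energy_with V {T} (F : set_system T) {FF : Filter F}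
    (th om : 'I_N -> T -> R) (Th W : 'I_N -> R) :
  (forall i j, continuous (V i j)) ->
  (forall i, th i t @[t --> F] --> Th i) -> (forall i, om i t @[t --> F] --> W i) ->
  energy_with V (fun j => th j t) (fun j => om j t) @[t --> F] --> energy_with V Th W.
Proof.
move=> Vc thc omc; have sqc (f : T -> R) (l : R) : f t @[t --> F] --> l ->
    f t ^+ 2 @[t --> F] --> l ^+ 2.
  by move=> fl; under eq_fun do rewrite expr2; rewrite expr2; exact: cvgM.
apply: cvgD; apply: cvgM; try exact: cvg_cst.
  by apply: (cvg_big add_continuous) => // i _; exact/sqc/omc.
apply: (cvg_big add_continuous) => // i _; apply: (cvg_big add_continuous) => // j _.
apply: sqc; apply: cvgB (cvg_cst _); apply: cvg_comp; [exact: cvgB | exact: Vc].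
Qed.

Lemma energy_ge_pair Th W i j : i != j ->
  k2 / (2 * N%:R) * (`|Th j - Th i| - thinf i j) ^+ 2 <= energy k2 thinf Th W.
Proof.
move=> ij; have N0 : 0 < N%:R :> R by rewrite ltr0n (leq_ltn_trans _ (ltn_ord i)).
pose g k l := (`|Th l - Th k| - thinf k l) ^+ 2.
have gji : g j i = g i j by rewrite /g distrC thinf_sym.
have pot : g i j + g j i <= \sum_(k < N) \sum_(l < N) g k l.
  rewrite pair_big /=; apply: (@ler_sum_pair _ _ (fun p => g p.1 p.2) (i, j) (j, i)).
    by rewrite xpair_eqE negb_and ij.
  by move=> p; exact: sqr_ge0.
rewrite /energy -[X in X <= _]add0r; apply: lerD.
  by rewrite mulr_ge0 // sumr_ge0 // => k _; exact: sqr_ge0.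
apply: le_trans (ler_wpM2l _ pot); last by rewrite divr_ge0 ?mulr_ge0 ?ltW.
rewrite gji (_ : k2 / (4 * N%:R) * _ = k2 / (2 * N%:R) * g i j) //.
by field; exact: lt0r_neq0.
Qed.

Lemma energy_pair_radius Th W E i j : energy k2 thinf Th W <= E -> i != j ->
  `| `|Th j - Th i| - thinf i j| <= radius E.
Proof.
move=> WE ij; have N0 : 0 < N%:R :> R by rewrite ltr0n (leq_ltn_trans _ (ltn_ord i)).
have K0 : 0 < k2 / (2 * N%:R) by rewrite divr_gt0 ?mulr_gt0.
have pair := le_trans (energy_ge_pair Th W ij) WE.
have E0 : 0 <= E by apply: le_trans pair; rewrite mulr_ge0 ?sqr_ge0 ?ltW.
rewrite /radius (_ : 2 * N%:R * E / k2 = E / (k2 / (2 * N%:R))); last first.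
  by field; rewrite !lt0r_neq0.
rewrite -sqrtr_sqr ler_sqrt; last by rewrite divr_ge0 // ltW.
by rewrite ler_pdivlMr // mulrC.
Qed.

Lemma min_offdiag_le (th : 'I_N -> 'I_N -> R) i j : i != j -> min_offdiag th <= th i j.
Proof.
exact: (@bigmin_le_cond _ _ _ _ (i, j) (fun p : 'I_N * 'I_N => p.1 != p.2)
                                      (fun p => th p.1 p.2)).
Qed.

Lemma le_max_offdiag (th : 'I_N -> 'I_N -> R) i j : i != j -> th i j <= max_offdiag th.
Proof.
exact: (@le_bigmax_cond _ _ _ _ (i, j) (fun p : 'I_N * 'I_N => p.1 != p.2)
                                      (fun p => th p.1 p.2)).
Qed.

Lemma min_offdiag_attained (th : 'I_N -> 'I_N -> R) : (1 < N)%N ->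
  exists i j, i != j /\ th i j = min_offdiag th.
Proof.
move=> N1; pose i0 : 'I_N := Ordinal (ltnW N1); pose i1 : 'I_N := Ordinal N1.
rewrite /min_offdiag (@bigmin_eq_arg _ _ _ _ (i0, i1)
  (fun p : 'I_N * 'I_N => p.1 != p.2) (fun p => th p.1 p.2)) //.
  by case: arg_minP => //= [[i j]] /= ij _; exists i, j.
move=> [i j] _ /=; apply: le_trans (ler_norm _) _; rewrite /absbound.
rewrite (bigD1 i) //= (bigD1 j) //= -addrA lerDl.
by rewrite addr_ge0 ?sumr_ge0 // => k _; rewrite sumr_ge0.
Qed.

Lemma radius_lt_min_offdiag Th W : (1 < N)%N ->
  energy k2 thinf Th W < k2 * min_offdiag thinf ^+ 2 / (2 * N%:R) ->
  radius (energy k2 thinf Th W) < min_offdiag thinf.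
Proof.
move=> N1; set m := min_offdiag thinf; set E := energy k2 thinf Th W => Em.
have N0 : 0 < N%:R :> R by rewrite ltr0n ltnW.
set K := k2 / (2 * N%:R); have K0 : 0 < K by rewrite divr_gt0 ?mulr_gt0.
have {}Em : E < K * m ^+ 2 by rewrite /K mulrAC.
have [i [j [ij thm]]] := min_offdiag_attained thinf N1.
have pair := energy_ge_pair Th W ij; rewrite thm -/m -/K -/E in pair.
have m0 : 0 < m.
  rewrite ltNge; apply/negP => m0; move: Em; rewrite ltNge; apply/negP/negPn.
  apply: le_trans pair; rewrite ler_pM2l //.
  have := normr_ge0 (Th j - Th i); nra.
rewrite /radius (_ : 2 * N%:R * E / k2 = E / K); last by rewrite /K; field; rewrite !lt0r_neq0.
by rewrite -[m]gtr0_norm // -sqrtr_sqr ltr_sqrt ?exprn_gt0 // ltr_pdivrMr // mulrC.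
Qed.

Lemma phase_gap_bounds Th W E i j : energy k2 thinf Th W <= E -> i != j ->
  min_offdiag thinf - radius E <= `|Th j - Th i| <= max_offdiag thinf + radius E.
Proof.
move=> WE ij; have := energy_pair_radius WE ij; rewrite ler_norml => /andP[lo hi].
have := min_offdiag_le thinf ij; have := le_max_offdiag thinf ij.
by move=> ? ?; apply/andP; split; lra.
Qed.

Lemma kuramoto_power_balance Th W sig : (forall i j, Num.sg (Th j - Th i) = sig i j) ->
  \sum_(i < N) W i * kuramoto_rhs k0 k1 k2 thinf Th W i
  + k2 / (2 * N%:R) * \sum_(i < N) \sum_(j < N)
      (sig i j * (Th j - Th i) - thinf i j) * sig i j * (W j - W i)
  = - (2 * N%:R)^-1 * \sum_(i < N) \sum_(j < N) coupling Th i j * (W j - W i) ^+ 2.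
Proof.
move=> sgE; pose a := coupling Th.
pose p i j := (sig i j * (Th j - Th i) - thinf i j) * sig i j.
have sigN i j : sig j i = - sig i j by rewrite -!sgE -opprB sgrN.
have pN i j : p j i = - p i j by rewrite /p sigN thinf_sym -opprB; ring.
have fluxN i j : a j i * (W i - W j) = - (a i j * (W j - W i)).
  by rewrite /a /coupling -opprB cosN; ring.
have rhsE i : kuramoto_rhs k0 k1 k2 thinf Th W i
    = N%:R^-1 * \sum_j a i j * (W j - W i) + k2 / N%:R * \sum_j p i j.
  by rewrite /kuramoto_rhs; congr (_ + _ * _); apply: eq_bigr => j _; rewrite normrEsg sgE.
have -> : \sum_i W i * kuramoto_rhs k0 k1 k2 thinf Th W i
    = N%:R^-1 * \sum_i \sum_j a i j * (W j - W i) * W i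
      + k2 / N%:R * \sum_i \sum_j p i j * W i.
  rewrite 2!mulr_sumr -big_split /=; apply: eq_bigr => i _.
  by rewrite rhsE -!mulr_suml; ring.
(* Symmetrizing both antisymmetric sums, the bonding force exactly cancels
   the time derivative of the potential, and the damping term becomes a
   Dirichlet form. *)
rewrite (@sum_antisym_mulr _ _ (fun i j => a i j * (W j - W i)) W fluxN).
rewrite (@sum_antisym_mulr _ _ p W pN) invfM.
have -> : \sum_i \sum_j a i j * (W j - W i) * (W j - W i)
    = \sum_i \sum_j coupling Th i j * (W j - W i) ^+ 2.
  by apply: eq_bigr => i _; apply: eq_bigr => j _; rewrite expr2 mulrA.
ring.
Qed.

End Configuration.

Section Trajectory.
Variables (R : realType) (N : nat) (k0 k1 k2 : R) (thinf : 'I_N -> 'I_N -> R)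
  (tau : \bar R) (theta omega : 'I_N -> R -> R).
Hypotheses (N_gt1 : (1 < N)%N) (k0_ge0 : 0 <= k0) (k2_gt0 : 0 < k2)
  (thinf_sym : forall i j, thinf i j = thinf j i).
Hypothesis kuramoto_ode : forall i t, 0 < t -> (t%:E < tau)%E ->
  is_derive t 1 (theta i) (omega i t) /\
  is_derive t 1 (omega i)
    (kuramoto_rhs k0 k1 k2 thinf (fun j => theta j t) (fun j => omega j t) i).
Hypotheses (theta_cvg0 : forall i, theta i x @[x --> 0^'+] --> theta i 0)
  (omega_cvg0 : forall i, omega i x @[x --> 0^'+] --> omega i 0).

Let Th t : 'I_N -> R := fun j => theta j t.
Let W t : 'I_N -> R := fun j => omega j t.
Let E t := energy k2 thinf (Th t) (W t).
Let Es sig t := senergy k2 thinf sig (Th t) (W t).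

Lemma state_cvg s : 0 < s -> (s%:E < tau)%E ->
  (forall i, theta i x @[x --> s] --> theta i s) /\
  (forall i, omega i x @[x --> s] --> omega i s).
Proof.
by move=> s0 st; split=> i; apply: is_derive_cvg; [exact: (kuramoto_ode i s0 st).1 |
                                                 exact: (kuramoto_ode i s0 st).2].
Qed.

Lemma state_cvg_right s : 0 <= s -> (s%:E < tau)%E ->
  (forall i, theta i x @[x --> s^'+] --> theta i s) /\
  (forall i, omega i x @[x --> s^'+] --> omega i s).
Proof.
rewrite le_eqVlt => /predU1P[<- //|s0 st].
by have [thc omc] := state_cvg s0 st; split=> i; apply: cvg_at_right_filter.
Qed.

Lemma is_derive_senergy sig u : 0 < u -> (u%:E < tau)%E ->
  is_derive u 1 (Es sig)
    (\sum_(i < N) omega i u * kuramoto_rhs k0 k1 k2 thinf (Th u) (W u) i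
     + k2 / (2 * N%:R) * \sum_(i < N) \sum_(j < N)
         (sig i j * (theta j u - theta i u) - thinf i j) * sig i j * (omega j u - omega i u)).
Proof.
move=> u0 ut; have Dth i := (kuramoto_ode i u0 ut).1; have Dom i := (kuramoto_ode i u0 ut).2.
have Dkin : is_derive u 1 (fun t => \sum_(i < N) omega i t ^+ 2)
    (\sum_(i < N) 2 * omega i u * kuramoto_rhs k0 k1 k2 thinf (Th u) (W u) i).
  by have := is_derive_sum (fun i => is_derive_sqr (Dom i)); rewrite fct_sumE.
have Dpair i j : is_derive u 1
    (fun t => (sig i j * (theta j t - theta i t) - thinf i j) ^+ 2)
    (2 * (sig i j * (theta j u - theta i u) - thinf i j)
       * (sig i j * (omega j u - omega i u))).
  have -> : (fun t => (sig i j * (theta j t - theta i t) - thinf i j) ^+ 2)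
      = (sig i j \*: (theta j - theta i) - cst (thinf i j)) ^+ 2.
    by apply/funext => t; rewrite !fctE.
  apply: is_derive_eq (is_deriveX 2 (is_deriveB (is_deriveZ (sig i j)
    (is_deriveB (Dth j) (Dth i))) (is_derive_cst (thinf i j) u 1))) _.
  by rewrite !fctE expr1 subr0.
have Drow i : is_derive u 1
    (fun t => \sum_(j < N) (sig i j * (theta j t - theta i t) - thinf i j) ^+ 2)
    (\sum_(j < N) 2 * (sig i j * (theta j u - theta i u) - thinf i j)
                     * (sig i j * (omega j u - omega i u))).
  by have := is_derive_sum (Dpair i); rewrite fct_sumE.
have Dpot := is_derive_sum Drow; rewrite fct_sumE in Dpot.
have -> : Es sig = 2^-1 \*: (fun t => \sum_(i < N) omega i t ^+ 2)
    + k2 / (4 * N%:R) \*: (fun t => \sum_(i < N) \sum_(j < N)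
                                (sig i j * (theta j t - theta i t) - thinf i j) ^+ 2).
  by apply/funext => t.
apply: is_derive_eq (is_deriveD (is_deriveZ 2^-1 Dkin) (is_deriveZ (k2 / (4 * N%:R)) Dpot)) _.
have N0 : N%:R != 0 :> R by rewrite pnatr_eq0 -lt0n ltnW.
have kin : \sum_(i < N) 2 * omega i u * kuramoto_rhs k0 k1 k2 thinf (Th u) (W u) i
    = 2 * \sum_(i < N) omega i u * kuramoto_rhs k0 k1 k2 thinf (Th u) (W u) i.
  by rewrite mulr_sumr; apply: eq_bigr => i _; rewrite mulrA.
have pot : \sum_(i < N) \sum_(j < N) 2 * (sig i j * (theta j u - theta i u) - thinf i j)
                                      * (sig i j * (omega j u - omega i u))
    = 2 * \sum_(i < N) \sum_(j < N) (sig i j * (theta j u - theta i u) - thinf i j)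
                                      * sig i j * (omega j u - omega i u).
  rewrite mulr_sumr; apply: eq_bigr => i _.
  by rewrite mulr_sumr; apply: eq_bigr => j _; ring.
by rewrite kin pot /GRing.scale /=; field.
Qed.

Lemma senergy_derive_le0 sig u : 0 < u -> (u%:E < tau)%E ->
  (forall i j, Num.sg (theta j u - theta i u) = sig i j) ->
  (forall i j, i != j -> 0 <= coupling k0 k1 (Th u) i j) ->
  derivable (Es sig) u 1 /\ (Es sig)^`() u <= 0.
Proof.
move=> u0 ut sgE a0; have D := is_derive_senergy sig u0 ut.
split; first exact: (@ex_derive _ _ _ _ _ _ _ D).
rewrite derive1E (@derive_val _ _ _ _ _ _ _ D) (kuramoto_power_balance _ _ _ thinf_sym).
  rewrite mulNr oppr_le0 mulr_ge0 ?invr_ge0 ?mulr_ge0 ?ler0n //.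
  apply: sumr_ge0 => i _; apply: sumr_ge0 => j _.
  by have [->|ij] := eqVneq i j; rewrite ?subrr ?expr0n ?mulr0 // mulr_ge0 ?sqr_ge0 ?a0.
exact: sgE.
Qed.

Lemma senergy_nonincreasing sig s b : 0 <= s -> s < b -> (b%:E < tau)%E ->
  (forall u, s < u < b ->
     (forall i j, Num.sg (theta j u - theta i u) = sig i j) /\
     (forall i j, i != j -> 0 <= coupling k0 k1 (Th u) i j)) ->
  forall v, s <= v <= b -> Es sig v <= Es sig s.
Proof.
move=> s0 sb bt frozen v /andP[sv vb].
have b0 : 0 < b := le_lt_trans s0 sb.
have inside u : s < u < b -> 0 < u /\ (u%:E < tau)%E.
  move=> /andP[su ub]; split; first exact: le_lt_trans su.
  by apply: lt_trans bt; rewrite lte_fin.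
have Es_cvg (F : set_system R) (FF : Filter F) x :
    (forall i, theta i t @[t --> F] --> theta i x) ->
    (forall i, omega i t @[t --> F] --> omega i x) -> Es sig t @[t --> F] --> Es sig x.
  by apply: cvg_energy_with => i j; exact: mulrl_continuous.
have Es_derive u : u \in `]s, b[%R -> derivable (Es sig) u 1 /\ (Es sig)^`() u <= 0.
  rewrite in_itv /= => su_b; have [u0 ut] := inside u su_b.
  by have [sgE a0] := frozen u su_b; exact: senergy_derive_le0.
have Es_cont : {within `[s, b], continuous (Es sig)}.
  apply/continuous_within_itvP => //; split.
  - move=> u; rewrite in_itv /= => /inside[u0 ut].
    by have [thc omc] := state_cvg u0 ut; exact: Es_cvg.
  - have st : (s%:E < tau)%E by apply: lt_trans bt; rewrite lte_fin.
    by have [thc omc] := state_cvg_right s0 st; exact: Es_cvg.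
  - have [thc omc] := state_cvg b0 bt.
    by apply: cvg_at_left_filter; exact: Es_cvg.
apply: (ler0_derive1_le_cc (fun u su_b => (Es_derive u su_b).1)
                           (fun u su_b => (Es_derive u su_b).2) Es_cont).
- by rewrite in_itv /= sv vb.
- by rewrite in_itv /= lexx ltW.
- exact: sv.
Qed.

Let U := max_offdiag thinf + radius N k2 (E 0).
Hypotheses (E0_small : E 0 < k2 * min_offdiag thinf ^+ 2 / (2 * N%:R))
  (U_lt_pi : U < pi) (coupling_U : 0 < k0 * cos U + k1).

Lemma near_right_frozen s : 0 <= s -> (s%:E < tau)%E -> E s <= E 0 ->
  \forall v \near s^'+, [/\ (v%:E < tau)%E,
     forall i j, Num.sg (theta j v - theta i v) = Num.sg (theta j s - theta i s) &
     forall i j, i != j -> 0 < coupling k0 k1 (Th v) i j].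
Proof.
move=> s0 st Es_le; have [thc _] := state_cvg_right s0 st.
have gap i j : i != j ->
    min_offdiag thinf - radius N k2 (E 0) <= `|theta j s - theta i s| <= U.
  by move=> ij; exact: (phase_gap_bounds k2_gt0 thinf_sym Es_le ij).
have rad_lt := radius_lt_min_offdiag k2_gt0 thinf_sym N_gt1 E0_small.
have dth i j : theta j v - theta i v @[v --> s^'+] --> theta j s - theta i s.
  exact: cvgB.
near=> v; split; near: v.
- exact: nbhs_right_lte.
- apply: filter_forall => i; apply: filter_forall => j.
  have [<-|ij] := eqVneq i j; first by apply: nearW => v; rewrite !subrr.
  apply: cvg_sgr_near (dth i j); rewrite -normr_gt0.
  have /andP[lo _] := gap i j ij; apply: lt_le_trans lo.
  by rewrite subr_gt0; exact: rad_lt.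
- apply: filter_forall => i; apply: filter_forall => j.
  have [<-|ij] := eqVneq i j; first exact: nearW.
  have a_cvg : coupling k0 k1 (Th v) i j @[v --> s^'+] --> coupling k0 k1 (Th s) i j.
    apply: cvgD (cvg_cst _); apply: cvgM (cvg_cst _) _.
    exact: cvg_comp (dth i j) (@continuous_cos _ _).
  have a_pos : 0 < coupling k0 k1 (Th s) i j.
    apply: lt_le_trans coupling_U _; rewrite lerD2r ler_wpM2l // ler_cos_norm //.
      by have /andP[_ hi] := gap i j ij.
    exact: ltW.
  exact: filterS (cvgr_gt _ a_cvg 0 a_pos).
Unshelve. all: by end_near.
Qed.

Lemma energy_local_nonincreasing s : 0 <= s -> (s%:E < tau)%E -> E s <= E 0 ->
  exists2 b, s < b & forall v, s <= v <= b -> E v <= E s.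
Proof.
move=> s0 st Es_le; pose sig i j := Num.sg (theta j s - theta i s).
have [b sb frozen] := nbhs_right_itv (near_right_frozen s0 st Es_le).
have [bt _ _] := frozen b ltac:(by rewrite sb lexx).
have E_Es v : s <= v <= b -> E v = Es sig v.
  move=> /andP[]; rewrite le_eqVlt => /predU1P[<- _|sv vb]; apply: energy_senergy => //.
  by have [_ sgE _] := frozen v ltac:(by rewrite sv vb).
exists b => // v svb; rewrite !E_Es ?lexx ?(ltW sb) //.
apply: (senergy_nonincreasing s0 sb bt) => // u /andP[su ub].
have [_ sgE a_pos] := frozen u ltac:(by rewrite su ltW).
by split => // i j ij; exact/ltW/a_pos.
Qed.

Lemma energy_le_initial t : 0 <= t -> (t%:E < tau)%E -> E t <= E 0.
Proof.
move=> t0 tt; have before v : v <= t -> (v%:E < tau)%E.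
  by move=> vt; apply: le_lt_trans tt; rewrite lee_fin.
apply: continuous_induction t0 (lexx _) _ _ => [s /andP[s0 st]|s /andP[s0 st] Es_le].
  have [thc omc] := state_cvg s0 (before s st).
  apply: cvg_at_left_filter; apply: (cvg_energy_with (V := fun _ _ x => `|x|)) thc omc.
  by move=> i j; exact: norm_continuous.
have [b sb Hb] := energy_local_nonincreasing s0 (before s (ltW st)) Es_le.
by exists b => // v /Hb /le_trans; apply.
Qed.

Lemma phase_gap_ge t i j : 0 <= t -> (t%:E < tau)%E -> i != j ->
  min_offdiag thinf - radius N k2 (E 0) <= `|theta i t - theta j t|.
Proof.
move=> t0 tt ij; rewrite distrC.
by have /andP[] := phase_gap_bounds k2_gt0 thinf_sym (energy_le_initial t0 tt) ij.
Qed.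

End Trajectory.

Theorem theorem3p1 (R : realType) (N : nat) (k0 k1 k2 : R)
    (thinf : 'I_N -> 'I_N -> R) (tau : \bar R)
    (theta omega : 'I_N -> R -> R) :
  (1 < N)%N ->
  0 <= k0 -> 0 <= k1 -> 0 < k2 ->
  (forall i, thinf i i = 0) -> (forall i j, thinf i j = thinf j i) ->
  (0 < tau)%E ->
  (* smooth solution on [0, tau) *)
  (forall i, theta i x @[x --> 0^'+] --> theta i 0) ->
  (forall i, omega i x @[x --> 0^'+] --> omega i 0) ->
  (forall i t, 0 < t -> (t%:E < tau)%E ->
     is_derive t 1 (theta i) (omega i t) /\
     is_derive t 1 (omega i)
       (kuramoto_rhs k0 k1 k2 thinf (fun j => theta j t) (fun j => omega j t) i)) ->
  (* assumptions on initial data and parameters *)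
  let Th0 := fun j => theta j 0 in
  let W0 := fun j => omega j 0 in
  let E0 := energy k2 thinf Th0 W0 in
  let U := Ubound k2 thinf E0 in
  inS U Th0 W0 ->
  E0 < k2 * (min_offdiag thinf) ^+ 2 / (2 * N%:R) ->
  0 < k0 * cos U + k1 ->
  (* conclusion: no collision on [0, tau) nor as t -> tau^- *)
  (forall i j t, i != j -> 0 <= t -> (t%:E < tau)%E -> theta i t != theta j t) /\
  (forall i j, i != j ->
     ~ ((fun t => theta i t - theta j t) @ to_left_of tau --> (0 : R))).
Proof.
move=> N_gt1 k0_ge0 _ k2_gt0 _ thinf_sym tau_gt0 theta_cvg0 omega_cvg0 ode Th0 W0 E0 U
  [_ U_lt_pi] E0_small coupling_U.
have gap_gt0 : 0 < min_offdiag thinf - radius N k2 E0.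
  by rewrite subr_gt0 (radius_lt_min_offdiag k2_gt0 thinf_sym N_gt1 E0_small).
have gap := phase_gap_ge N_gt1 k0_ge0 k2_gt0 thinf_sym ode theta_cvg0 omega_cvg0
  E0_small U_lt_pi coupling_U.
split=> [i j t ij t0 tt|i j ij].
  by apply/eqP => eq_th; move: (gap t i j t0 tt ij); rewrite eq_th subrr normr0 leNgt gap_gt0.
apply: (not_cvg_to_left_of tau_gt0 gap_gt0) => t t0 tt.
by rewrite sub0r normrN; exact: gap.
Qed.
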